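(* Let $\alpha>0$, $\theta>1$ be fixed reals, let $k\ge2$ be an integer and let $\rho$ be a positive real with $\rho<(k+3)^{-1}$. Let $N,\xi$ be reals with \[N^{3\rho-k}<\lvert\xi\rvert\le N^{\rho-\theta}.\] Then, provided $N$ is sufficiently large, there exist coprime $a,b\in\mathbb{Z}$ with \[\Big\lvert\xi\alpha-\frac ab\Big\rvert\le b^{-2}\quad\text{and}\quad N^{2\rho}\le b\le N^{k-2\rho}.\] *)

From Stdlib Require Import Reals ZArith.
Open Scope R_scope.

(** Dirichlet's theorem with denominators up to [Q = N^(k-2ρ)] yields a
    reduced fraction [a/b] with [b <= Q] and [|b ξα - a| < 1/Q <= 1/b].  The
    denominator cannot be small: if [a = 0], then [|ξα| > α N^(3ρ-k) >= 2/Q]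
    already exceeds [|b ξα|]; if [a <> 0], then [|b ξα| > 1/2], whereas
    [N^(2ρ) |ξα| <= α N^(3ρ-θ) <= 1/2]. *)

From Stdlib Require Import Reals ZArith List Lia Lra Classical.
Open Scope R_scope.

Lemma pigeonhole_nat (f : nat -> nat) (M : nat) :
  (forall j, (j <= M)%nat -> (f j < M)%nat) ->
  exists i j, (j < i <= M)%nat /\ f i = f j.
Proof.
  intros Hf; apply NNPP; intros Hinj.
  assert (Hnodup : NoDup (map f (seq 0 (S M)))).
  { apply NoDup_map_NoDup_ForallPairs; [|apply seq_NoDup].
    intros i j Hi Hj Hij; apply in_seq in Hi; apply in_seq in Hj.
    destruct (Nat.lt_trichotomy i j) as [Hlt|[Heq|Hlt]]; [| exact Heq |];
      exfalso; apply Hinj.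
    - exists j, i; split; [lia | symmetry; exact Hij].
    - exists i, j; split; [lia | exact Hij]. }
  assert (Hincl : incl (map f (seq 0 (S M))) (seq 0 M)).
  { intros y Hy; apply in_map_iff in Hy; destruct Hy as [j [<- Hj]].
    apply in_seq in Hj; apply in_seq; specialize (Hf j); lia. }
  pose proof (NoDup_incl_length Hnodup Hincl) as Hlen.
  rewrite length_map, !length_seq in Hlen; lia.
Qed.

Lemma Int_part_eq_dist_lt_1 (u v : R) :
  Int_part u = Int_part v -> Rabs (u - v) < 1.
Proof.
  intros Heq; pose proof (base_Int_part u); pose proof (base_Int_part v).
  rewrite Heq in *; apply Rabs_def1; lra.
Qed.

Lemma dirichlet_approx (x : R) (M : nat) : (1 <= M)%nat ->
  exists a b : Z, (1 <= b)%Z /\ IZR b <= INR M /\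
    Rabs (IZR b * x - IZR a) < / INR M.
Proof.
  intros HM.
  assert (HMpos : 0 < INR M) by (apply lt_0_INR; lia).
  set (g j := Int_part (INR M * frac_part (INR j * x))).
  assert (Hg : forall j, (0 <= g j < Z.of_nat M)%Z).
  { intros j; unfold g; pose proof (base_fp (INR j * x)) as [Hf0 Hf1].
    pose proof (base_Int_part (INR M * frac_part (INR j * x))) as [Hlo Hhi].
    split.
    - assert (Hneg : IZR (-1) < IZR (Int_part (INR M * frac_part (INR j * x)))) by nra.
      apply lt_IZR in Hneg; lia.
    - apply lt_IZR; rewrite <- INR_IZR_INZ; nra. }
  destruct (pigeonhole_nat (fun j => Z.to_nat (g j)) M) as [i [j [Hji Hgij]]].
  { intros j _; specialize (Hg j); lia. }
  assert (Heq : g i = g j) by (apply Z2Nat.inj; apply Hg || exact Hgij).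
  exists (Int_part (INR i * x) - Int_part (INR j * x))%Z, (Z.of_nat i - Z.of_nat j)%Z.
  split; [lia|].
  rewrite !minus_IZR, <- !INR_IZR_INZ.
  assert (Hij : INR j < INR i <= INR M) by (split; apply lt_INR || apply le_INR; lia).
  pose proof (pos_INR j).
  split; [lra|].
  pose proof (Int_part_eq_dist_lt_1 _ _ Heq) as Hdist.
  unfold frac_part in Hdist.
  replace (_ - _) with (INR M * ((INR i - INR j) * x
    - (IZR (Int_part (INR i * x)) - IZR (Int_part (INR j * x))))) in Hdist by ring.
  rewrite Rabs_mult, (Rabs_right (INR M)) in Hdist by lra.
  apply (Rmult_lt_reg_l (INR M)); [exact HMpos|]; rewrite Rinv_r; lra.
Qed.

Lemma reduce_fraction (x e : R) (a b : Z) :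
  (1 <= b)%Z -> Rabs (IZR b * x - IZR a) < e ->
  exists a' b' : Z, Z.gcd a' b' = 1%Z /\ (1 <= b' <= b)%Z /\
    Rabs (IZR b' * x - IZR a') < e.
Proof.
  intros Hb Happrox; set (d := Z.gcd a b).
  assert (Hd : (0 < d)%Z).
  { assert (d <> 0%Z) by (intros Hd0; apply Z.gcd_eq_0 in Hd0; lia).
    pose proof (Z.gcd_nonneg a b); unfold d in *; lia. }
  destruct (Z.gcd_divide_l a b) as [a' Ha]; destruct (Z.gcd_divide_r a b) as [b' Hb'].
  fold d in Ha, Hb'.
  exists a', b'; split; [|split; [nia|]].
  - replace a' with (a / d)%Z by (rewrite Ha; apply Z.div_mul; lia).
    replace b' with (b / d)%Z by (rewrite Hb'; apply Z.div_mul; lia).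
    apply Z.gcd_div_gcd; [lia | reflexivity].
  - rewrite Ha, Hb', !mult_IZR in Happrox.
    replace (IZR b' * IZR d * x - IZR a' * IZR d)
      with (IZR d * (IZR b' * x - IZR a')) in Happrox by ring.
    assert (1 <= IZR d) by (apply IZR_le; lia).
    rewrite Rabs_mult, (Rabs_right (IZR d)) in Happrox by lra.
    pose proof (Rabs_pos (IZR b' * x - IZR a')); nra.
Qed.

Lemma dirichlet_coprime (x : R) (M : nat) : (1 <= M)%nat ->
  exists a b : Z, Z.gcd a b = 1%Z /\ (1 <= b)%Z /\ IZR b <= INR M /\
    Rabs (IZR b * x - IZR a) < / INR M.
Proof.
  intros HM; destruct (dirichlet_approx x M HM) as [a [b [Hb [HbM Happrox]]]].
  destruct (reduce_fraction x _ a b Hb Happrox) as [a' [b' [Hgcd [Hb' Happrox']]]].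
  assert (IZR b' <= IZR b) by (apply IZR_le; lia).
  exists a', b'; repeat split; [exact Hgcd | lia | lra | exact Happrox'].
Qed.

Lemma abs_sub_div_le_inv_sqr (x a b : R) :
  0 < b -> Rabs (b * x - a) <= / b -> Rabs (x - a / b) <= / b ^ 2.
Proof.
  intros Hb Happrox.
  replace (x - a / b) with ((b * x - a) * / b) by (field; lra).
  replace (/ b ^ 2) with (/ b * / b) by (field; lra).
  rewrite Rabs_mult, Rabs_inv, (Rabs_right b) by lra.
  apply Rmult_le_compat_r; [left; apply Rinv_0_lt_compat|]; lra.
Qed.

(** [e <= |x|] rules out [a = 0], and [P |x| <= 1/2] rules out [a <> 0]. *)
Lemma approx_denominator_ge (x e P : R) (a b : Z) :
  (1 <= b)%Z -> Rabs (IZR b * x - IZR a) < e ->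
  e <= Rabs x -> e <= / 2 -> P * Rabs x <= / 2 -> P <= IZR b.
Proof.
  intros Hb Happrox He_x He_half HP.
  apply Rnot_lt_le; intros HbP.
  assert (HB : 1 <= IZR b) by (apply IZR_le; lia).
  assert (Hbx : Rabs (IZR b * x) = IZR b * Rabs x)
    by (rewrite Rabs_mult, (Rabs_right (IZR b)); lra).
  assert (Hmono : IZR b * Rabs x <= P * Rabs x)
    by (apply Rmult_le_compat_r; [apply Rabs_pos | lra]).
  destruct (Z.eq_dec a 0) as [Ha0|Ha0].
  - subst a; rewrite Rminus_0_r, Hbx in Happrox.
    assert (Rabs x <= IZR b * Rabs x)
      by (rewrite <- (Rmult_1_l (Rabs x)) at 1; apply Rmult_le_compat_r; [apply Rabs_pos | lra]).
    lra.
  - assert (Ha : 1 <= Rabs (IZR a)).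
    { rewrite <- abs_IZR; apply IZR_le; lia. }
    pose proof (Rabs_triang_inv (IZR a) (IZR a - IZR b * x)) as Htri.
    replace (IZR a - (IZR a - IZR b * x)) with (IZR b * x) in Htri by ring.
    rewrite Rabs_minus_sym in Happrox.
    lra.
Qed.

Lemma exists_nat_between_half (Q : R) : 2 <= Q ->
  exists M : nat, (2 <= M)%nat /\ Q / 2 <= INR M <= Q.
Proof.
  intros HQ; pose proof (base_Int_part Q) as [Hlo Hhi].
  assert (H2 : (1 < Int_part Q)%Z) by (apply lt_IZR; lra).
  exists (Z.to_nat (Int_part Q)).
  rewrite INR_IZR_INZ, Z2Nat.id by lia.
  split; [lia | lra].
Qed.

Lemma Rpower_pos (x y : R) : 0 < Rpower x y.
Proof. apply exp_pos. Qed.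

Definition eventually (P : R -> Prop) : Prop :=
  exists N0 : R, 0 < N0 /\ forall N : R, N0 <= N -> P N.

Lemma eventually_and (P Q : R -> Prop) :
  eventually P -> eventually Q -> eventually (fun N => P N /\ Q N).
Proof.
  intros [N1 [HN1 HP]] [N2 [HN2 HQ]].
  exists (Rmax N1 N2); split; [apply (Rlt_le_trans _ N1); [lra | apply Rmax_l]|].
  intros N HN; pose proof (Rmax_l N1 N2); pose proof (Rmax_r N1 N2).
  split; [apply HP | apply HQ]; lra.
Qed.

Lemma eventually_Rpower_ge (e c : R) : 0 < e ->
  eventually (fun N => c <= Rpower N e).
Proof.
  intros He; set (c' := Rmax c 1).
  assert (Hc' : 0 < c') by (pose proof (Rmax_r c 1); unfold c'; lra).
  exists (Rpower c' (/ e)); split; [apply Rpower_pos|].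
  intros N HN.
  assert (Hmono : Rpower (Rpower c' (/ e)) e <= Rpower N e)
    by (apply Rle_Rpower_l; [lra | split; [apply Rpower_pos | exact HN]]).
  rewrite Rpower_mult, Rinv_l, Rpower_1 in Hmono by lra.
  pose proof (Rmax_l c 1); unfold c' in *; lra.
Qed.

Lemma Rabs_mul_ge_of_Rpower_lt (alpha rho kr N xi : R) :
  0 < alpha -> 2 / alpha <= Rpower N rho -> Rpower N (3 * rho - kr) < Rabs xi ->
  2 / Rpower N (kr - 2 * rho) <= Rabs (xi * alpha).
Proof.
  intros Halpha Hrho Hlo.
  assert (Hsplit : Rpower N (3 * rho - kr) = Rpower N rho * / Rpower N (kr - 2 * rho))
    by (rewrite <- Rpower_Ropp, <- Rpower_plus; f_equal; ring).
  rewrite Hsplit in Hlo; rewrite Rabs_mult, (Rabs_right alpha) by lra.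
  pose proof (Rinv_0_lt_compat _ (Rpower_pos N (kr - 2 * rho))).
  apply (Rmult_le_compat_r alpha) in Hrho; [|lra].
  unfold Rdiv in *; rewrite Rmult_assoc, Rinv_l, Rmult_1_r in Hrho by lra.
  nra.
Qed.

Lemma Rpower_mul_Rabs_le_half (alpha theta rho N xi : R) :
  0 < alpha -> 2 * alpha <= Rpower N (theta - 3 * rho) ->
  Rabs xi <= Rpower N (rho - theta) ->
  Rpower N (2 * rho) * Rabs (xi * alpha) <= / 2.
Proof.
  intros Halpha Htheta Hhi.
  assert (Hsplit : Rpower N (2 * rho) * Rpower N (rho - theta)
                   = / Rpower N (theta - 3 * rho))
    by (rewrite <- Rpower_Ropp, <- Rpower_plus; f_equal; ring).
  pose proof (Rpower_pos N (2 * rho)); pose proof (Rpower_pos N (theta - 3 * rho)).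
  rewrite Rabs_mult, (Rabs_right alpha) by lra.
  apply (Rle_trans _ (alpha * / Rpower N (theta - 3 * rho))).
  - rewrite <- Hsplit.
    replace (Rpower N (2 * rho) * (Rabs xi * alpha))
      with (alpha * (Rpower N (2 * rho) * Rabs xi)) by ring.
    apply Rmult_le_compat_l; [lra|].
    apply Rmult_le_compat_l; lra.
  - apply (Rmult_le_reg_l (2 * Rpower N (theta - 3 * rho))); [lra|].
    field_simplify; lra.
Qed.

Lemma approx_at_scale (alpha theta rho kr N xi : R) :
  0 < alpha ->
  2 <= Rpower N (kr - 2 * rho) -> 2 / alpha <= Rpower N rho ->
  2 * alpha <= Rpower N (theta - 3 * rho) ->
  Rpower N (3 * rho - kr) < Rabs xi -> Rabs xi <= Rpower N (rho - theta) ->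
  exists a b : Z,
    Z.gcd a b = 1%Z /\
    Rabs (xi * alpha - IZR a / IZR b) <= / (IZR b ^ 2) /\
    Rpower N (2 * rho) <= IZR b /\
    IZR b <= Rpower N (kr - 2 * rho).
Proof.
  intros Halpha HQ Hrho Htheta Hlo Hhi.
  set (Q := Rpower N (kr - 2 * rho)) in *.
  destruct (exists_nat_between_half Q HQ) as [M [HM2 [HMlo HMhi]]].
  assert (HM : 2 <= INR M) by (apply (le_INR 2); exact HM2).
  destruct (dirichlet_coprime (xi * alpha) M ltac:(lia))
    as [a [b [Hgcd [Hb [HbM Happrox]]]]].
  assert (HB : 1 <= IZR b) by (apply IZR_le; lia).
  exists a, b; split; [exact Hgcd|]; split; [|split; [|lra]].
  - apply abs_sub_div_le_inv_sqr; [lra|].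
    apply Rlt_le, (Rlt_le_trans _ _ _ Happrox), Rinv_le_contravar; lra.
  - apply (approx_denominator_ge (xi * alpha) (/ INR M) _ a b Hb Happrox).
    + apply (Rle_trans _ (2 / Q)); [|exact (Rabs_mul_ge_of_Rpower_lt _ _ _ _ _ Halpha Hrho Hlo)].
      unfold Rdiv; rewrite <- (Rinv_inv 2), <- Rinv_mult.
      apply Rinv_le_contravar; lra.
    + apply Rinv_le_contravar; lra.
    + exact (Rpower_mul_Rabs_le_half _ _ _ _ _ Halpha Htheta Hhi).
Qed.

Theorem lemma5p6 (alpha theta rho : R) (k : nat) :
  0 < alpha -> 1 < theta -> (2 <= k)%nat ->
  0 < rho -> rho < / (INR k + 3) ->
  exists N0 : R, 0 < N0 /\
    forall N xi : R, N0 <= N ->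
      Rpower N (3 * rho - INR k) < Rabs xi ->
      Rabs xi <= Rpower N (rho - theta) ->
      exists a b : Z,
        Z.gcd a b = 1%Z /\
        Rabs (xi * alpha - IZR a / IZR b) <= / (IZR b ^ 2) /\
        Rpower N (2 * rho) <= IZR b /\
        IZR b <= Rpower N (INR k - 2 * rho).
Proof.
  intros Halpha Htheta Hk Hrho Hrho_k.
  assert (Hk2 : 2 <= INR k) by (apply (le_INR 2); exact Hk).
  assert (Hrho5 : 5 * rho < 1).
  { apply (Rmult_lt_compat_l (INR k + 3)) in Hrho_k; [|lra].
    rewrite Rinv_r in Hrho_k by lra; nra. }
  destruct (eventually_and _ _ (eventually_Rpower_ge (INR k - 2 * rho) 2 ltac:(lra))
             (eventually_and _ _ (eventually_Rpower_ge rho (2 / alpha) Hrho)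
                (eventually_Rpower_ge (theta - 3 * rho) (2 * alpha) ltac:(lra))))
    as [N0 [HN0 Hlarge]].
  exists N0; split; [exact HN0|].
  intros N xi HN; destruct (Hlarge N HN) as [HQ [Hr Ht]].
  apply approx_at_scale; assumption.
Qed.
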